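(* Let $K=\mathbb{Z}/3$ and let $G$ be a simple graph with edges $e_1,\dots,e_s$ ($s\ge 1$). Then the set $\mathcal{T}\cup\mathcal{E}\cup\{t_s^2\}$ is a Gröbner basis of the ideal $(I(X),t_s^2)\subseteq S=K[t_1,\dots,t_s]$ with respect to the graded reverse lexicographic order on $S$ (with $t_1>t_2>\dots>t_s$).
   Context: Let $G$ be a simple graph with vertex set $\{1,\dots,n\}$ and a fixed ordering $e_1,\dots,e_s$ of its edges, $s\ge1$; edge $e_k$ is identified with the variable $t_k$ of $S=K[t_1,\dots,t_s]$. For a finite field $K$, let $X\subseteq\mathbb{P}^{s-1}$ be the image of the projective torus $\{(x_1:\dots:x_n): x_i\neq0 \ \forall i\}\subseteq\mathbb{P}^{n-1}$ under the map whose $k$-th coordinate is $x_ix_j$ when $e_k=\{i,j\}$ (the projective algebraic toric set parameterized by the edges of $G$). $I(X)\subseteq S$ is the ideal generated by the homogeneous polynomials vanishing on all points of $X$. For $\alpha\in\mathbb{N}^s$ write $t^\alpha=t_1^{\alpha_1}\cdots t_s^{\alpha_s}$. An Eulerian subgraph is a subgraph in which every vertex has even degree. A binomial $t^\alpha-t^\beta$ is an Eulerian binomial if $t^\alpha,t^\beta$ are relatively prime, square-free, of the same degree, and the edges $\{e_i: i\in\operatorname{supp}(\alpha)\cup\operatorname{supp}(\beta)\}$ form an Eulerian subgraph of $G$. $\mathcal{E}$ denotes the set of all Eulerian binomials and $\mathcal{T}=\{t_i^2-t_j^2: 1\le i,j\le s\}$. *)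

From mathcomp Require Import all_boot all_order all_algebra.
From mathcomp Require Import mpoly.
Set Implicit Arguments. Unset Strict Implicit. Unset Printing Implicit Defensive.
Import GRing.Theory.
Local Open Scope ring_scope.

Section Defs.
Variable (s : nat) (R : ringType).
Local Notation poly := {mpoly R[s]}.

Definition ideal_gen (P : poly -> Prop) (f : poly) : Prop :=
  exists (k : nat) (c g : 'I_k -> poly),
    (forall i, P (g i)) /\ f = \sum_(i < k) c i * g i.

Definition homogeneous (p : poly) : Prop :=
  exists d : nat, forall m, m \in msupp p -> mdeg m = d.

Definition grevlex_lt (a b : 'X_{1..s}) : bool :=
  (mdeg a < mdeg b)%N ||
  ((mdeg a == mdeg b) &&
   [exists k : 'I_s, (b k < a k)%N &&
      [forall j : 'I_s, (k < j)%N ==> (a j == b j)]]).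

(* Leading monomial of p w.r.t. grevlex (0 if p = 0). *)
Definition grevlex_lm (p : poly) : 'X_{1..s} :=
  foldr (fun m acc => if grevlex_lt acc m then m else acc) 0%MM (msupp p).

Definition grevlex_groebner (B I : poly -> Prop) : Prop :=
  (forall g, B g -> I g) /\
  (forall f, I f -> f != 0 ->
     exists g, [/\ B g, g != 0 & (grevlex_lm g <= grevlex_lm f)%MM]).

End Defs.

Definition last_var (s : nat) (hs : (0 < s)%N) : 'I_s :=
  Ordinal (etrans (ltn_predL s) hs).

Section Graph.
(* A simple graph on the vertex set 'I_n (= {1..n}) with the edges listed in
   a fixed order e_0, ..., e_(s-1): each edge is a 2-element vertex set, and
   the listing is injective (no repeated edge). *)
Variables (n s : nat) (E : 'I_s -> {set 'I_n}).
Local Notation poly := {mpoly 'F_3[s]}.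

Definition simple_graph_edges : Prop :=
  injective E /\ forall k, #|E k| = 2%N.

(* The point of X (a representative in K^s) parameterized by x in the torus:
   its k-th coordinate is x_i x_j where e_k = {i, j}. *)
Definition toric_point (x : 'I_n -> 'F_3) : 'I_s -> 'F_3 :=
  fun k => \prod_(i in E k) x i.

Definition vanishes_on_X (f : poly) : Prop :=
  homogeneous f /\
  forall x : 'I_n -> 'F_3, (forall i, x i != 0) -> f.@[toric_point x] = 0.

Definition IX : poly -> Prop := ideal_gen vanishes_on_X.

Definition T_set (f : poly) : Prop :=
  exists i j : 'I_s, f = 'X_i ^+ 2 - 'X_j ^+ 2.

Definition eulerian_binomial (f : poly) : Prop :=
  exists a b : 'X_{1..s},
    [/\ f = 'X_[a] - 'X_[b],
        forall i, minn (a i) (b i) = 0%N,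
        forall i, (a i <= 1)%N /\ (b i <= 1)%N,
        mdeg a = mdeg b &
        forall v : 'I_n,
          ~~ odd #|[set k : 'I_s | (0 < a k + b k)%N && (v \in E k)]| ].

End Graph.

From mathcomp Require Import all_boot all_order all_algebra.
From mathcomp Require Import mpoly.
From mathcomp Require Import zify.
From Stdlib Require Import Classical.
Set Implicit Arguments. Unset Strict Implicit. Unset Printing Implicit Defensive.
Import GRing.Theory.
Local Open Scope ring_scope.

(* Write m for the leading monomial of f in the ideal. If t_k^2 divides m, then
   t_k^2 - t_s^2 (or t_s^2 itself) has leading monomial t_k^2, because t_s is the
   smallest variable for grevlex. If m is squarefree, it suffices to find a
   grevlex-smaller monomial a with the same degree parity and the same parity of
   degree at every vertex: the symmetric difference of the odd supports of m and a
   is then an Eulerian edge set, and splitting it into two halves, the half containing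
   its last edge taken outside m, gives an Eulerian binomial whose leading monomial
   divides m. Such an a exists, for otherwise the linear form
     f |-> sum_(x in {+-1}^n) chi(x) [X^(deg m)] f((x_i x_j X)_(ij))
   with chi the character of {+-1}^n given by the vertex parities of m vanishes on
   the ideal (it kills I(X) by construction, and t_s^2 only shifts degrees by 2)
   while its value at f is 2^n f_m != 0. Over Z/3, z^2 = 1 for z != 0, which makes
   T and the Eulerian binomials vanish on X, and 2 != 0. *)

Lemma subset_of_card (T : finType) (S : {set T}) h :
  (h <= #|S|)%N -> exists2 X : {set T}, X \subset S & #|X| = h.
Proof.
case/card_geqP => r [uniq_r <- sub_rS]; exists [set x in r].
  by apply/subsetP => x; rewrite inE => /sub_rS.
by rewrite cardsE; apply/card_uniqP.
Qed.

Lemma odd_card_symdiff (T : finType) (A B : {set T}) :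
  odd #|(A :\: B) :|: (B :\: A)| = odd #|A| (+) odd #|B|.
Proof.
rewrite cardsU (_ : _ :&: _ = set0) ?cards0 ?subn0; last first.
  by apply/setP => x; rewrite !inE; case: (x \in A); rewrite ?andbF.
by rewrite -(cardsID B A) -(cardsID A B) setIC !oddD addbACA addbb.
Qed.

Lemma ltn_same_odd m n : (m < n)%N -> odd m = odd n -> (m.+2 <= n)%N.
Proof.
move=> lt_mn odd_mn; rewrite ltn_neqAle lt_mn andbT.
by apply/eqP => e; move: odd_mn; rewrite -e /=; case: (odd m).
Qed.

Lemma odd_sum_card (I : finType) (P : pred I) (F : I -> nat) :
  odd (\sum_(k | P k) F k) = odd #|[set k | P k && odd (F k)]|.
Proof.
rewrite -sum1dep_card big_mkcondr /=.
apply: (big_ind2 (fun x y => odd x = odd y)) => //.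
  by move=> x1 x2 y1 y2 h1 h2; rewrite !oddD h1 h2.
by move=> k _; case: (odd (F k)).
Qed.

Section EulerianSets.
Variables (n s : nat) (E : 'I_s -> {set 'I_n}).
Local Notation incident v := [set k | v \in E k].

Definition eulerian_set (F : {set 'I_s}) : Prop :=
  forall v, ~~ odd #|F :&: incident v|.

Lemma eulerian_symdiff (M A : {set 'I_s}) :
  (forall v, odd #|M :&: incident v| = odd #|A :&: incident v|) ->
  eulerian_set ((M :\: A) :|: (A :\: M)).
Proof.
move=> same_parity v.
have -> : (M :\: A :|: A :\: M) :&: incident v =
    (M :&: incident v) :\: (A :&: incident v) :|: (A :&: incident v) :\: (M :&: incident v).
  by apply/setP => k; rewrite !inE; case: (k \in M); case: (k \in A); case: (v \in E k).
by rewrite odd_card_symdiff same_parity addbb.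
Qed.

Lemma eulerian_exchange (M A : {set 'I_s}) :
  (forall v, odd #|M :&: incident v| = odd #|A :&: incident v|) ->
  (#|A| <= #|M|)%N -> odd #|A| = odd #|M| ->
  (#|A| = #|M| ->
     exists2 k : 'I_s, k \in A :\: M & forall j : 'I_s, (k < j)%N -> (j \in A) = (j \in M)) ->
  exists al be : {set 'I_s},
    [/\ al \subset M, [disjoint al & be], #|al| = #|be|, eulerian_set (al :|: be) &
        exists2 k : 'I_s, k \in be & forall j : 'I_s, (k < j)%N -> j \notin al :|: be].
Proof.
move=> same_parity le_AM odd_AM last_in_A.
set a0 := M :\: A; set b0 := A :\: M; set C := a0 :|: b0.
have card_M : #|M| = (#|M :&: A| + #|a0|)%N by rewrite cardsID.
have card_A : #|A| = (#|M :&: A| + #|b0|)%N by rewrite setIC cardsID.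
have card_C : #|C| = (#|a0| + #|b0|)%N.
  rewrite cardsU (_ : _ :&: _ = set0) ?cards0 ?subn0 //.
  by apply/setP => k; rewrite !inE; case: (k \in M); case: (k \in A); rewrite ?andbF.
have le_ba : (#|b0| <= #|a0|)%N by rewrite -(leq_add2l #|M :&: A|) -card_M -card_A.
have odd_ba : odd #|b0| = odd #|a0|.
  by move: odd_AM; rewrite card_A card_M !oddD => /(congr1 (addb (odd #|M :&: A|))); rewrite !addKb.
have [k0 k0C] : exists k0, k0 \in C.
  apply/set0Pn; rewrite -card_gt0 card_C.
  have [lt_AM|ge_AM] := ltnP #|A| #|M|; first by move: lt_AM; rewrite card_A card_M; lia.
  have [k kb0 _] := last_in_A (anti_leq (introT andP (conj le_AM ge_AM))).
  by rewrite addn_gt0; apply/orP; right; apply/card_gt0P; exists k.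
case: (@arg_maxnP _ k0 (fun j : 'I_s => j \in C) val k0C) => k kC k_max.
have above_C (j : 'I_s) : (k < j)%N -> j \notin C.
  by move=> lt_kj; apply/negP => /k_max le_jk; have := leq_ltn_trans le_jk lt_kj; rewrite ltnn.
have lt_ba_of_a0 : k \in a0 -> (#|b0| < #|a0|)%N.
  move=> ka0; rewrite ltn_neqAle le_ba andbT; apply/eqP => eq_ba.
  have [k' k'b0 agree] : exists2 k' : 'I_s,
      k' \in b0 & forall j : 'I_s, (k' < j)%N -> (j \in A) = (j \in M).
    by apply: last_in_A; rewrite card_A card_M eq_ba.
  have : (k' <= k)%N by apply: k_max; rewrite inE k'b0 orbT.
  rewrite leq_eqVlt => /orP[/eqP/val_inj eq_k'k|/agree].
    by move: ka0 k'b0; rewrite eq_k'k !inE => /andP[/negbTE kNA _] /andP[_]; rewrite kNA.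
  by move: ka0; rewrite !inE => /andP[/negbTE -> ->].
(* [al] is taken inside [a0 :\ k], so that the last index [k] of [C] lies in [be]. *)
have half_C : (#|C| <= (#|a0 :\ k|).*2)%N.
  have lt2_ba ka0 := ltn_same_odd (lt_ba_of_a0 ka0) odd_ba.
  move: le_ba lt2_ba (cardsD1 k a0); rewrite card_C -addnn.
  set x := #|b0|; set y := #|a0|.
  by case: (k \in a0) => /=; lia.
have even_C : ~~ odd #|C| by rewrite card_C oddD odd_ba addbb.
have [X sub_X card_X] : exists2 X : {set 'I_s}, X \subset a0 :\ k & #|X| = #|C|./2.
  by apply: subset_of_card; rewrite -leq_double even_halfK.
have sub_XC : X \subset C.
  by apply: subset_trans sub_X (subset_trans (subD1set _ _) (subsetUl _ _)).
have kX : k \notin X by apply/negP => /(subsetP sub_X); rewrite !inE eqxx.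
have split_C : X :|: C :\: X = C.
  by apply/setP => j; rewrite in_setU in_setD; case: (boolP (j \in X)) => //= /(subsetP sub_XC) ->.
exists X, (C :\: X); split.
- exact: subset_trans sub_X (subset_trans (subD1set _ _) (subsetDl _ _)).
- by rewrite -setI_eq0; apply/eqP/setP => j; rewrite !inE; case: (j \in X); rewrite ?andbF.
- by rewrite cardsDS // -(even_halfK even_C) card_X -addnn addnK.
- by rewrite split_C; apply: eulerian_symdiff.
- by exists k; rewrite ?in_setD ?kX ?split_C.
Qed.

End EulerianSets.

Section Grevlex.
Variable s : nat.
Implicit Types a b c : 'X_{1..s}.
Local Notation lt := (@grevlex_lt s).

Lemma grevlex_lt_irr a : ~~ lt a a.
Proof.
rewrite /grevlex_lt ltnn /=; apply/negP => /andP[_ /existsP[k /andP[]]].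
by rewrite ltnn.
Qed.

Lemma grevlex_lt_eqdegP a b : mdeg a = mdeg b ->
  reflect (exists2 k : 'I_s, (b k < a k)%N & forall j : 'I_s, (k < j)%N -> a j = b j)
          (lt a b).
Proof.
move=> eq_ab; rewrite /grevlex_lt eq_ab ltnn eqxx /=.
apply: (iffP existsP) => [[k /andP[lt_k /forallP agree]]|[k lt_k agree]].
  by exists k => // j lt_kj; apply/eqP; apply: (implyP (agree j)).
by exists k; rewrite lt_k; apply/forallP => j; apply/implyP => /agree ->.
Qed.

Lemma grevlex_lt_mdeg a b : lt a b -> (mdeg a <= mdeg b)%N.
Proof. by case/orP => [/ltnW //|/andP[/eqP -> _]]. Qed.

Lemma grevlex_lt_trans b a c : lt a b -> lt b c -> lt a c.
Proof.
move=> lt_ab lt_bc.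
have le_ab := grevlex_lt_mdeg lt_ab; have le_bc := grevlex_lt_mdeg lt_bc.
have [lt_ac|ge_ac] := ltnP (mdeg a) (mdeg c); first by rewrite /grevlex_lt lt_ac.
have eq_ab : mdeg a = mdeg b by apply/eqP; rewrite eqn_leq le_ab (leq_trans le_bc ge_ac).
have eq_bc : mdeg b = mdeg c by apply/eqP; rewrite eqn_leq le_bc -eq_ab ge_ac.
case/(grevlex_lt_eqdegP eq_ab): lt_ab => k1 lt1 agree1.
case/(grevlex_lt_eqdegP eq_bc): lt_bc => k2 lt2 agree2.
apply/(grevlex_lt_eqdegP (etrans eq_ab eq_bc)).
case: (ltngtP k1 k2) => [lt12|lt21|/val_inj eq12].
- exists k2 => [|j lt_j]; first by rewrite agree1.
  by rewrite agree1 ?agree2 // (ltn_trans lt12 lt_j).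
- exists k1 => [|j lt_j]; first by rewrite -agree2.
  by rewrite agree1 ?agree2 // (ltn_trans lt21 lt_j).
- by subst k2; exists k1 => [|j lt_j]; [apply: ltn_trans lt2 lt1 | rewrite agree1 ?agree2].
Qed.

Lemma grevlex_lt_asym a b : lt a b -> ~~ lt b a.
Proof.
by move=> lt_ab; apply/negP => /(grevlex_lt_trans lt_ab); rewrite (negbTE (grevlex_lt_irr a)).
Qed.

Lemma grevlex_lt_total a b : a != b -> lt a b || lt b a.
Proof.
move=> neq_ab.
have [lt_ab|lt_ba|eq_ab] := ltngtP (mdeg a) (mdeg b).
- by rewrite /grevlex_lt lt_ab.
- by rewrite /grevlex_lt lt_ba orbT.
have [k0 neq_k0] : exists k0 : 'I_s, a k0 != b k0.
  apply/existsP; apply: contraR neq_ab; rewrite negb_exists => /forallP eq_k.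
  by apply/eqP/mnmP => i; apply/eqP; rewrite -[_ == _]negbK.
case: (@arg_maxnP _ k0 (fun k : 'I_s => a k != b k) val neq_k0) => k neq_k k_max.
have agree (j : 'I_s) : (k < j)%N -> a j = b j.
  by move=> lt_kj; apply/eqP; apply: contraTT lt_kj => /k_max; rewrite -leqNgt.
case: (ltngtP (a k) (b k)) => [lt_k|lt_k|eq_k]; last by rewrite eq_k eqxx in neq_k.
  by apply/orP; right; apply/(grevlex_lt_eqdegP (esym eq_ab)); exists k => // j /agree.
by apply/orP; left; apply/(grevlex_lt_eqdegP eq_ab); exists k.
Qed.

Lemma grevlex_lt_0 a : ~~ lt a 0%MM.
Proof.
rewrite /grevlex_lt mdeg0 ltn0 /=; apply/negP => /andP[/eqP/eqP].
by rewrite mdeg_eq0 => /eqP ->; case/existsP => k; rewrite mnm0E ltnn.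
Qed.

Lemma grevlex_lmP (R : nzRingType) (p : {mpoly R[s]}) : p != 0 ->
  grevlex_lm p \in msupp p /\
  forall a, a \in msupp p -> a = grevlex_lm p \/ lt a (grevlex_lm p).
Proof.
move=> nz_p; rewrite /grevlex_lm.
set top := foldr _ 0%MM.
have top_max (r : seq 'X_{1..s}) :
    top r \in 0%MM :: r /\ forall a, a \in r -> a = top r \/ lt a (top r).
  elim: r => [|m r [top_in top_ge]] /=; first by rewrite inE.
  rewrite -/(top r); case: ifP => lt_top.
    split=> [|a]; first by rewrite !inE eqxx orbT.
    rewrite inE => /orP[/eqP ->|/top_ge [->|lt_a]]; [by left|by right|].
    by right; apply: grevlex_lt_trans lt_top.
  split=> [|a]; first by move: top_in; rewrite !inE => /orP[->|->]; rewrite ?orbT.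
  rewrite inE => /orP[/eqP ->|/top_ge //].
  have [-> | neq_m] := eqVneq m (top r); first by left.
  by right; move: (grevlex_lt_total neq_m); rewrite lt_top orbF.
have [top_in top_ge] := top_max (msupp p); split=> //.
move: top_in; rewrite inE => /orP[/eqP top0|//].
have : msupp p != [::] by rewrite msupp_eq0.
case: (msupp p) top_ge top0 => [//|a r] top_ge top0 _.
case: (top_ge a (mem_head _ _)) => [<-|]; first exact: mem_head.
by rewrite top0 (negbTE (grevlex_lt_0 a)).
Qed.

Lemma grevlex_lm_X (R : nzRingType) a : grevlex_lm ('X_[a] : {mpoly R[s]}) = a.
Proof.
rewrite /grevlex_lm msuppX /=; case: ifP => // nlt.
by apply/eqP; apply: contraFT nlt => /grevlex_lt_total; rewrite (negbTE (grevlex_lt_0 a)) orbF.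
Qed.

Lemma grevlex_lm_binomial (R : nzRingType) a b : lt b a ->
  ('X_[a] - 'X_[b] : {mpoly R[s]}) != 0 /\ grevlex_lm ('X_[a] - 'X_[b] : {mpoly R[s]}) = a.
Proof.
set p := 'X_[a] - 'X_[b] => lt_ba.
have neq_ab : a != b by apply: contraTneq lt_ba => ->; apply: grevlex_lt_irr.
have coef_p c : p@_c = (a == c)%:R - (b == c)%:R by rewrite mcoeffB !mcoeffX.
have a_in : a \in msupp p.
  by rewrite mcoeff_msupp coef_p eqxx [b == a]eq_sym (negbTE neq_ab) subr0 oner_neq0.
have nz_p : p != 0 by apply: contraTneq a_in => ->; rewrite msupp0.
split=> //; have [lm_in lm_ge] := grevlex_lmP nz_p.
case: (lm_ge a a_in) => // lt_a.
have neq_a : a != grevlex_lm p by apply: contraTneq lt_a => <-; apply: grevlex_lt_irr.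
move: lm_in; rewrite mcoeff_msupp coef_p (negbTE neq_a) sub0r oppr_eq0.
have [eq_b _|] := eqVneq b (grevlex_lm p); last by rewrite /= mulr0n eqxx.
by rewrite -eq_b in lt_a; rewrite (negbTE (grevlex_lt_asym lt_ba)) in lt_a.
Qed.

End Grevlex.

Section SetMonomials.
Variable s : nat.
Implicit Types (a : 'X_{1..s}) (X : {set 'I_s}).

Definition mnm_of_set X : 'X_{1..s} := [multinom (i \in X : nat) | i < s].

Definition odd_supp a : {set 'I_s} := [set k | odd (a k)].

Lemma mnm_of_setE X j : mnm_of_set X j = (j \in X).
Proof. exact: mnmE. Qed.

Lemma mdeg_mnm_of_set X : mdeg (mnm_of_set X) = #|X|.
Proof.
rewrite mdegE -sum1_card [RHS]big_mkcond /=; apply: eq_bigr => i _.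
by rewrite mnm_of_setE; case: (i \in X).
Qed.

Lemma card_odd_supp_leqif a :
  (#|odd_supp a| <= mdeg a ?= iff [forall k, a k <= 1])%N.
Proof.
rewrite -sum1dep_card big_mkcond mdegE /=; apply: leqif_sum => k _.
by split; case: (a k) => [|[|j]] //=; case: (odd j).
Qed.

Lemma odd_card_odd_supp a : odd #|odd_supp a| = odd (mdeg a).
Proof. by rewrite mdegE odd_sum_card. Qed.

End SetMonomials.

Lemma ideal_gen_base s (R : nzRingType) (P : {mpoly R[s]} -> Prop) g : P g -> ideal_gen P g.
Proof.
by move=> Pg; exists 1%N, (fun _ => 1), (fun _ => g); rewrite big_ord1 mul1r.
Qed.

Lemma homogeneous_binomial s (R : nzRingType) (a b : 'X_{1..s}) :
  mdeg a = mdeg b -> homogeneous ('X_[a] - 'X_[b] : {mpoly R[s]}).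
Proof.
move=> eq_ab; exists (mdeg a) => m; rewrite mcoeff_msupp mcoeffB !mcoeffX.
have [-> //|_] := eqVneq a m; have [<- //|_] := eqVneq b m.
by rewrite subrr eqxx.
Qed.

Lemma F3_sqr_eq1 (z : 'F_3) : z != 0 -> z ^+ 2 = 1.
Proof. by case: z => [[|[|[|]]]] //= ?; rewrite ?expr2 /= => _; apply/val_inj. Qed.

Lemma F3_expr_odd (z : 'F_3) e : z != 0 -> z ^+ e = z ^+ odd e.
Proof.
move=> nz_z; rewrite -{1}(odd_double_half e) exprD -mul2n exprM F3_sqr_eq1 //.
by rewrite expr1n mulr1.
Qed.

Section ToricSet.
Variables (n s : nat) (E : 'I_s -> {set 'I_n}).
Local Notation poly := {mpoly 'F_3[s]}.

Definition vertex_deg (a : 'X_{1..s}) (v : 'I_n) : nat := (\sum_(k | v \in E k) a k)%N.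

Lemma mmap1_toric_point (x : 'I_n -> 'F_3) a :
  mmap1 (toric_point E x) a = \prod_v x v ^+ vertex_deg a v.
Proof.
rewrite /mmap1 (eq_bigr (fun k => \prod_v (if v \in E k then x v ^+ a k else 1))); last first.
  by move=> k _; rewrite -prodrXl big_mkcond.
rewrite exchange_big /=; apply: eq_bigr => v _.
by rewrite /vertex_deg -prodrXr [RHS]big_mkcond.
Qed.

Lemma toric_point_neq0 (x : 'I_n -> 'F_3) k : (forall v, x v != 0) -> toric_point E x k != 0.
Proof. by move=> nz_x; apply/prodf_neq0 => v _. Qed.

Lemma T_set_vanishes f : T_set f -> vanishes_on_X E f.
Proof.
case=> i [j ->]; split.
  by rewrite !mpolyXn; apply: homogeneous_binomial; rewrite !mdegMn !mdeg1.
move=> x nz_x; rewrite mevalB !rmorphXn /= !mevalXU !F3_sqr_eq1 ?subrr //;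
  exact: toric_point_neq0.
Qed.

Lemma eulerian_binomial_vanishes f : eulerian_binomial E f -> vanishes_on_X E f.
Proof.
case=> a [b [-> coprime_ab sqfree_ab eq_deg eulerian]].
split; first exact: homogeneous_binomial.
move=> x nz_x; rewrite mevalB !mevalX -!/(mmap1 _ _) !mmap1_toric_point.
apply/eqP; rewrite subr_eq0; apply/eqP; apply: eq_bigr => v _.
rewrite (F3_expr_odd _ (nz_x v)) [RHS](F3_expr_odd _ (nz_x v)); congr (_ ^+ _).
have : (vertex_deg a v + vertex_deg b v)%N = #|[set k | (0 < a k + b k)%N && (v \in E k)]|.
  rewrite /vertex_deg -big_split /= -sum1dep_card [RHS]big_mkcondl /=.
  apply: eq_bigr => k _; move: (coprime_ab k) (sqfree_ab k).
  by case: (a k) => [|[|?]]; case: (b k) => [|[|?]] //= _ [].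
move/(congr1 odd); rewrite oddD => odd_sum; move: (eulerian v); rewrite -odd_sum.
by case: (odd (vertex_deg a v)); case: (odd (vertex_deg b v)).
Qed.

Definition vertex_parity (a : 'X_{1..s}) : {ffun 'I_n -> bool} :=
  [ffun v => odd (vertex_deg a v)].

Definition sign_point (x : {ffun 'I_n -> bool}) : 'I_s -> 'F_3 :=
  toric_point E (fun v => (-1) ^+ x v).

Definition homog_eval (x : {ffun 'I_n -> bool}) (g : poly) : {poly 'F_3} :=
  mmap polyC (fun k => sign_point x k *: 'X) g.

Definition character (u x : {ffun 'I_n -> bool}) : 'F_3 := \prod_v ((-1) ^+ x v) ^+ u v.

Definition parity_functional (u : {ffun 'I_n -> bool}) (d : nat) (g : poly) : 'F_3 :=
  \sum_x character u x * (homog_eval x g)`_d.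

Lemma sign_point_neq0 x k : sign_point x k != 0.
Proof. by apply: toric_point_neq0 => v; rewrite signr_eq0. Qed.

Lemma sum_sign_expr (e : nat) :
  \sum_(b : bool) ((-1) ^+ b) ^+ e = if odd e then 0 else 2%:R :> 'F_3.
Proof.
rewrite big_bool /= expr1 expr1n -signr_odd.
by case: (odd e); rewrite ?expr1 ?expr0 ?addNr.
Qed.

Lemma sum_character_mmap1 u a :
  \sum_x character u x * mmap1 (sign_point x) a =
  if vertex_parity a == u then 2%:R ^+ n else 0.
Proof.
under eq_bigr => x _.
  rewrite /character /sign_point mmap1_toric_point -big_split /=.
  under eq_bigr do rewrite -exprD.
  over.
rewrite -(bigA_distr_bigA
  (fun (v : 'I_n) (b : bool) => ((-1) ^+ b) ^+ (u v + vertex_deg a v)%N)) /=.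
under eq_bigr do rewrite sum_sign_expr oddD oddb.
have [<-|neq_u] := eqVneq (vertex_parity a) u.
  by rewrite (eq_bigr (fun _ => 2%:R)) ?prodr_const ?card_ord // => v _; rewrite ffunE addbb.
have [v neq_v] : exists v, vertex_parity a v != u v.
  apply/existsP; apply: contraR neq_u => /existsPn same.
  by apply/eqP/ffunP => v; apply/eqP; rewrite -[_ == _]negbK same.
apply/eqP/prodf_eq0; exists v => //.
by move: neq_v; rewrite ffunE eq_sym => /negbTE; case: (u v); case: (odd _).
Qed.

Lemma mmap1_scaleX x a :
  mmap1 (fun k => sign_point x k *: 'X) a = mmap1 (sign_point x) a *: 'X^(mdeg a).
Proof.
rewrite /mmap1 (eq_bigr (fun k => sign_point x k ^+ a k *: 'X ^+ a k)); last first.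
  by move=> k _; rewrite exprZn.
by rewrite scaler_prod prodrXr -mdegE.
Qed.

Lemma coef_homog_eval x g d :
  (homog_eval x g)`_d = \sum_(a <- msupp g | mdeg a == d) g@_a * mmap1 (sign_point x) a.
Proof.
rewrite /homog_eval /mmap coef_sum [RHS]big_mkcond /=; apply: eq_bigr => a _.
rewrite mmap1_scaleX coefCM coefZ coefXn eq_sym.
by case: eqP; rewrite ?mulr1 ?mulr0.
Qed.

Lemma parity_functionalE u d g :
  parity_functional u d g =
  \sum_(a <- msupp g | mdeg a == d) g@_a * (if vertex_parity a == u then 2%:R ^+ n else 0).
Proof.
rewrite /parity_functional.
under eq_bigr do rewrite coef_homog_eval mulr_sumr.
rewrite exchange_big /=; apply: eq_bigr => a _.
by rewrite -sum_character_mmap1 mulr_sumr; apply: eq_bigr => x _; rewrite mulrCA.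
Qed.

Lemma parity_functional_sum u d k (F : 'I_k -> poly) :
  parity_functional u d (\sum_(i < k) F i) = \sum_(i < k) parity_functional u d (F i).
Proof.
apply: (big_morph _ _ _) => [p q|].
  rewrite /parity_functional -big_split /=; apply: eq_bigr => x _.
  by rewrite /homog_eval mmapD coefD mulrDr.
by rewrite /parity_functional big1 // => x _; rewrite /homog_eval mmap0 coef0 mulr0.
Qed.

Lemma homog_evalM x p q : homog_eval x (p * q) = homog_eval x p * homog_eval x q.
Proof. exact: (mmap_is_multiplicative _ polyC).1. Qed.

Lemma homog_eval_vanishing x h : vanishes_on_X E h -> homog_eval x h = 0.
Proof.
case=> [[e homog_h] vanish_h]; rewrite /homog_eval /mmap.
rewrite (eq_big_seq (fun a => (h@_a * mmap1 (sign_point x) a) *: 'X^e)); last first.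
  by move=> a a_in; rewrite -(homog_h a a_in) mmap1_scaleX mul_polyC scalerA.
by rewrite -scaler_suml -mevalE vanish_h ?scale0r // => v; rewrite signr_eq0.
Qed.

Lemma parity_functional_mul_vanishing u d c h :
  vanishes_on_X E h -> parity_functional u d (c * h) = 0.
Proof.
move=> vanish_h; rewrite /parity_functional big1 // => x _.
by rewrite homog_evalM (homog_eval_vanishing x vanish_h) mulr0 coef0 mulr0.
Qed.

Lemma parity_functional_mul_sqr u d c (l : 'I_s) :
  parity_functional u d (c * 'X_l ^+ 2) =
  if (d < 2)%N then 0 else parity_functional u (d - 2) c.
Proof.
have eval_sqr x : homog_eval x ('X_l ^+ 2) = 'X^2.
  rewrite expr2 homog_evalM /homog_eval mmapX mmap1U -expr2 exprZn.
  by rewrite F3_sqr_eq1 ?sign_point_neq0 ?scale1r.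
rewrite /parity_functional; case: ifP => lt_d2.
  by rewrite big1 // => x _; rewrite homog_evalM eval_sqr coefMXn lt_d2 mulr0.
by apply: eq_bigr => x _; rewrite homog_evalM eval_sqr coefMXn lt_d2.
Qed.

Definition parity_below (m a : 'X_{1..s}) : Prop :=
  [/\ vertex_parity a = vertex_parity m, odd (mdeg a) = odd (mdeg m) & grevlex_lt a m].

Lemma parity_functional_ideal_eq0 (l : 'I_s) u d f :
  ideal_gen (fun g : poly => IX E g \/ g = 'X_l ^+ 2) f ->
  (forall a, (2 <= d)%N -> mdeg a = (d - 2)%N -> vertex_parity a != u) ->
  parity_functional u d f = 0.
Proof.
case=> k [c [g [gen_g ->]]] no_parity.
rewrite parity_functional_sum big1 // => i _.
case: (gen_g i) => [[k' [c' [h [vanish_h ->]]]]|->].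
  rewrite mulr_sumr parity_functional_sum big1 // => j _.
  by rewrite mulrA parity_functional_mul_vanishing.
rewrite parity_functional_mul_sqr; case: ltnP => // le2d.
rewrite parity_functionalE big1_seq // => a /andP[/eqP deg_a _].
by rewrite (negbTE (no_parity a le2d deg_a)) mulr0.
Qed.

Lemma parity_functional_lm f : f != 0 ->
  (forall a, ~ parity_below (grevlex_lm f) a) ->
  parity_functional (vertex_parity (grevlex_lm f)) (mdeg (grevlex_lm f)) f =
  f@_(grevlex_lm f) * 2%:R ^+ n.
Proof.
move=> nz_f no_below; set m := grevlex_lm f.
have [m_in m_max] := grevlex_lmP nz_f.
rewrite parity_functionalE big_mkcond /= (bigD1_seq m) ?msupp_uniq //= !eqxx big1 ?addr0 //.
move=> a neq_am; case: eqP => // deg_a; case: eqP => [par_a|]; last by rewrite mulr0.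
case: (boolP (a \in msupp f)) => [a_in|]; last first.
  by rewrite mcoeff_msupp negbK => /eqP ->; rewrite mul0r.
case: (m_max a a_in) => [eq_am|lt_am]; first by rewrite eq_am eqxx in neq_am.
by case: (no_below a); split; rewrite ?deg_a.
Qed.

Lemma exists_parity_below (l : 'I_s) f :
  ideal_gen (fun g : poly => IX E g \/ g = 'X_l ^+ 2) f -> f != 0 ->
  exists a, parity_below (grevlex_lm f) a.
Proof.
move=> f_in nz_f; apply: NNPP => no_below.
have := parity_functional_lm nz_f (fun a below => no_below (ex_intro _ a below)).
rewrite (parity_functional_ideal_eq0 f_in) => [/esym/eqP|a le2 deg_a].
  have [m_in _] := grevlex_lmP nz_f.
  by rewrite mulf_eq0 expf_eq0 andbF orbF; move: m_in; rewrite mcoeff_msupp => /negbTE ->.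
apply/negP => /eqP par_a; apply: no_below; exists a; split => //.
  by rewrite deg_a -{2}(subnK le2) oddD addbF.
by rewrite /grevlex_lt deg_a ltn_subrL (leq_trans _ le2).
Qed.

Lemma odd_vertex_deg a v :
  odd (vertex_deg a v) = odd #|odd_supp a :&: [set k | v \in E k]|.
Proof.
rewrite /vertex_deg odd_sum_card; congr odd; apply: eq_card => k.
by rewrite !inE andbC.
Qed.

Lemma eulerian_binomial_of_split (al be : {set 'I_s}) (k : 'I_s) :
  [disjoint al & be] -> #|al| = #|be| -> eulerian_set E (al :|: be) ->
  k \in be -> (forall j : 'I_s, (k < j)%N -> j \notin al :|: be) ->
  [/\ eulerian_binomial E ('X_[mnm_of_set al] - 'X_[mnm_of_set be]),
      'X_[mnm_of_set al] - 'X_[mnm_of_set be] != 0 :> poly &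
      grevlex_lm ('X_[mnm_of_set al] - 'X_[mnm_of_set be] : poly) = mnm_of_set al].
Proof.
move=> dis card_ab eul k_be k_top.
have lt_ba : grevlex_lt (mnm_of_set be) (mnm_of_set al).
  apply/grevlex_lt_eqdegP; first by rewrite !mdeg_mnm_of_set card_ab.
  exists k; first by rewrite !mnm_of_setE k_be (disjointFl dis k_be).
  move=> j /k_top; rewrite !mnm_of_setE inE negb_or => /andP[/negbTE -> /negbTE ->] //.
have [nz_g lm_g] := grevlex_lm_binomial 'F_3 lt_ba.
split=> //; exists (mnm_of_set al), (mnm_of_set be); split=> //.
- move=> i; rewrite !mnm_of_setE; case: (boolP (i \in al)) => [i_al|]; last by rewrite min0n.
  by rewrite (disjointFr dis i_al).
- by move=> i; rewrite !mnm_of_setE; split; case: (_ \in _).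
- by rewrite !mdeg_mnm_of_set.
- move=> v; have := eul v; congr (~~ odd _); apply: eq_card => j.
  by rewrite !inE !mnm_of_setE; case: (j \in al); case: (j \in be).
Qed.

Lemma eulerian_binomial_below (m a : 'X_{1..s}) :
  (forall k, m k <= 1)%N -> parity_below m a ->
  exists g : poly, [/\ eulerian_binomial E g, g != 0 & (grevlex_lm g <= m)%MM].
Proof.
move=> sqfree_m [par_a odd_a lt_am].
have card_M : #|odd_supp m| = mdeg m.
  by apply/eqP; rewrite (card_odd_supp_leqif m); apply/forallP.
have le_A := card_odd_supp_leqif a; have le_am := grevlex_lt_mdeg lt_am.
have [||||al [be [sub_al dis card_ab eul [k k_be k_top]]]] :=
  @eulerian_exchange _ _ E (odd_supp m) (odd_supp a).
- move=> v; rewrite -!odd_vertex_deg.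
  by move/ffunP: par_a => /(_ v); rewrite !ffunE.
- by rewrite card_M; apply: leq_trans le_A le_am.
- by rewrite card_M odd_card_odd_supp.
- rewrite card_M => card_A.
  have eq_deg : mdeg a = mdeg m by apply/eqP; rewrite eqn_leq le_am -card_A le_A.
  have /forallP sqfree_a : [forall k, a k <= 1]%N.
    by rewrite -(card_odd_supp_leqif a) card_A eq_deg.
  case/(grevlex_lt_eqdegP eq_deg): lt_am => k lt_k agree.
  exists k => [|j /agree]; last by rewrite !inE => ->.
  rewrite !inE; move: (sqfree_a k) (sqfree_m k) lt_k.
  by case: (a k) => [|[|]]; case: (m k) => [|[|]].
have [g_eul nz_g lm_g] := eulerian_binomial_of_split dis card_ab eul k_be k_top.
exists ('X_[mnm_of_set al] - 'X_[mnm_of_set be]); split=> //.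
rewrite lm_g; apply/mnm_lepP => i; rewrite mnm_of_setE.
case: (boolP (i \in al)) => // /(subsetP sub_al); rewrite inE.
by case: (m i).
Qed.

End ToricSet.

Lemma sqr_lm_divisor s (hs : (0 < s)%N) (m : 'X_{1..s}) (k : 'I_s) : (1 < m k)%N ->
  exists g : {mpoly 'F_3[s]},
    [/\ T_set g \/ g = 'X_(last_var hs) ^+ 2, g != 0 & (grevlex_lm g <= m)%MM].
Proof.
set l := last_var hs => gt1_mk.
have sqr_le : (U_(k) *+ 2 <= m)%MM.
  by apply/mnm_lepP => i; rewrite mulmnE mnm1E; case: (eqVneq k i) => [<-|].
have nz_sqr (j : 'I_s) : 'X_j ^+ 2 != 0 :> {mpoly 'F_3[s]}.
  by rewrite mpolyXn -msupp_eq0 msuppX.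
have [eq_kl|neq_kl] := eqVneq k l.
  exists ('X_l ^+ 2); split; [by right | exact: nz_sqr |].
  by rewrite mpolyXn grevlex_lm_X -eq_kl.
have lt_lk : grevlex_lt (U_(l) *+ 2) (U_(k) *+ 2).
  apply/grevlex_lt_eqdegP; first by rewrite !mdegMn !mdeg1.
  exists l => [|j lt_lj]; first by rewrite !mulmnE !mnm1E eqxx (negbTE neq_kl).
  by move: lt_lj (ltn_ord j); rewrite /l /last_var /=; lia.
have [nz_g lm_g] := grevlex_lm_binomial 'F_3 lt_lk.
exists ('X_k ^+ 2 - 'X_l ^+ 2); rewrite !mpolyXn lm_g.
by split=> //; left; exists k, l; rewrite !mpolyXn.
Qed.

Theorem proposition2p3 (n s : nat) (hs : (0 < s)%N) (E : 'I_s -> {set 'I_n}) :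
  simple_graph_edges E ->
  grevlex_groebner
    (fun f : {mpoly 'F_3[s]} =>
       T_set f \/ eulerian_binomial E f \/ f = 'X_(last_var hs) ^+ 2)
    (ideal_gen (fun f : {mpoly 'F_3[s]} =>
                  IX E f \/ f = 'X_(last_var hs) ^+ 2)).
Proof.
move=> _; split.
  move=> g g_basis; apply: ideal_gen_base.
  case: g_basis => [T_g|[E_g|->]]; last by right.
    by left; apply/ideal_gen_base/T_set_vanishes.
  by left; apply/ideal_gen_base/eulerian_binomial_vanishes.
move=> f f_in nz_f.
case: (boolP [forall k, grevlex_lm f k <= 1]%N) => [/forallP sqfree|].
  have [a below] := exists_parity_below f_in nz_f.
  have [g [E_g nz_g lm_g]] := eulerian_binomial_below sqfree below.
  by exists g; split=> //; right; left.
rewrite negb_forall => /existsP[k]; rewrite -ltnNge => gt1_k.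
have [g [g_basis nz_g lm_g]] := sqr_lm_divisor hs gt1_k.
by exists g; split=> //; case: g_basis; [left | right; right].
Qed.
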